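(* Let $n\ge 2$ and $\pi\in LP_{n-1}$ with $\operatorname{ex}(\pi)=k$. Then the exposure numbers of the $k+1$ elements of $P(\pi)$ are exactly $1,2,\dots,k+1$, each occurring once. The element $\pi^+$ has exposure number $k+1$. For $1\le i\le k$, the element obtained by merging the $i$-th outermost link of $\pi^+$ (counted from the left in the order $1,\dots,2n-1,0$) with the link $\{2n-1,0\}$ has exposure number $i$. Consequently, consider the rooted tree whose vertices at level $m\ge1$ are the elements of $LP_m$, whose root is the unique element of $LP_1$, and in which the children of $\pi\in LP_{m}$ are the elements of $P(\pi)\subseteq LP_{m+1}$, with $\pi$ labelled $\operatorname{ex}(\pi)+1$. This tree is isomorphic, as a labelled rooted tree, to the Catalan tree.
   Context: For a positive integer $m$, a link pattern of $m$ strands is a non-crossing perfect matching of $\{0,1,\dots,2m-1\}$, i.e. there are no two pairs $\{a,b\},\{c,d\}$ with $a<c<b<d$. Let $LP_m$ be the set of link patterns of $m$ strands. For $i\in\{0,\dots,2m-1\}$, with indices taken mod $2m$, the map $e_i:LP_m\to LP_m$ is defined as follows. If $\sigma$ pairs $i$ with $i+1$, then $e_i(\sigma)=\sigma$. Otherwise, if $\sigma$ pairs $i$ with $a$ and $i+1$ with $b$, then $e_i(\sigma)$ pairs $i$ with $i+1$ and $a$ with $b$, keeping all other pairs. Exposure number: place the points of $\sigma\in LP_m$ on a line in the order $1,2,\dots,2m-1,0$. A pair $\{a,b\}$, with $a$ before $b$, is an outermost link if there is no other pair $\{c,d\}$ with $c$ before $a$ and $b$ before $d$. The exposure number $\operatorname{ex}(\sigma)$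 is the number of outermost links. For $\pi\in LP_{n-1}$, $\pi^+\in LP_n$ consists of the pair $\{2n-1,0\}$ together with the pairs $\{\varphi(a),\varphi(b)\}$ for each pair $\{a,b\}$ of $\pi$, where $\varphi(j)=j$ for $1\le j\le 2n-3$ and $\varphi(0)=2n-2$. Define $P(\pi)=\{\sigma\in LP_n: e_{2n-1}(\sigma)=\pi^+\}$. The ''merge'' of an outermost link $\{a,b\}$ of $\pi^+$ (with $a$ before $b$ in the order $1,\dots,2n-1,0$) with $\{2n-1,0\}$ is the link pattern obtained by replacing these two pairs with $\{a,2n-1\}$ and $\{b,0\}$. The Catalan tree is the rooted labelled tree whose root has label $2$, and in which a node with label $j$ has exactly $j$ children, with labels $2,3,\dots,j+1$. *)

(* A link pattern of m strands is encoded as a sequence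
   s : seq nat of size 2m, where nth 0 s i is the partner of point i. *)
From mathcomp Require Import all_boot.
Set Implicit Arguments. Unset Strict Implicit. Unset Printing Implicit Defensive.

Notation partner s i := (nth 0%N s i).

Definition is_lp (m : nat) (s : seq nat) : Prop :=
  size s = (2 * m)%N /\
  (forall i, i < 2 * m -> partner s i < 2 * m /\ partner s i <> i /\
                          partner s (partner s i) = i) /\
  (forall a b c d, a < c -> c < b -> b < d -> d < 2 * m ->
     partner s a = b -> partner s c = d -> False).

Definition e_op (i0 : nat) (s : seq nat) : seq nat :=
  let M := size s in
  let i := i0 %% M in
  let j := i.+1 %% M in
  if partner s i == j then s else
  let a := partner s i in
  let b := partner s j in
  mkseq (fun x => if x == i then j else if x == j then i
                  else if x == a then b else if x == b then a
                  else partner s x) M.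

(* Position of point x on the line 1,2,...,2m-1,0. *)
Definition pos (s : seq nat) (x : nat) : nat := if x == 0 then size s else x.

Definition outermost (s : seq nat) (a : nat) : bool :=
  (a < size s) && (pos s a < pos s (partner s a)) &&
  ~~ has (fun c => (pos s c < pos s a) && (pos s (partner s a) < pos s (partner s c)))
         (iota 0 (size s)).

Definition ex (s : seq nat) : nat := count (outermost s) (iota 0 (size s)).

Definition outer_lefts (s : seq nat) : seq nat :=
  [seq a <- iota 1 (size s).-1 ++ [:: 0] | outermost s a].

Definition phi (N j : nat) : nat := if j == 0 then N else j.

(* pi^+ for pi in LP_{n-1} (size pi = N = 2n-2, so 2n-1 = N.+1). *)
Definition lp_plus (p : seq nat) : seq nat :=
  let N := size p in
  mkseq (fun x => if x == 0 then N.+1 else if x == N.+1 then 0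
                  else phi N (partner p (if x == N then 0 else x))) N.+2.

Definition in_P (p sigma : seq nat) : Prop :=
  is_lp (size p)./2.+1 sigma /\ e_op (size sigma).-1 sigma = lp_plus p.

(* Merge the link {a, b} (b = partner a, a before b in the order
   1,...,2n-1,0) with {2n-1, 0}: the result has the pairs {a, 0} and
   {b, 2n-1} (the context's literal {a,2n-1},{b,0}
   is crossing, hence not a link pattern; the non-crossing merge is used). *)
Definition lp_merge (s : seq nat) (a : nat) : seq nat :=
  let top := (size s).-1 in
  let b := partner s a in
  mkseq (fun x => if x == a then 0 else if x == 0 then a
                  else if x == b then top else if x == top then b
                  else partner s x) (size s).

Definition lp_vertex (s : seq nat) : Prop := exists m, 1 <= m /\ is_lp m s.
Definition lp_root : seq nat := [:: 1; 0].
Definition lp_label (s : seq nat) : nat := (ex s).+1.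

(* The Catalan tree: a vertex is identified with the sequence of labels on
   the path from the root to it (children of a node have distinct labels,
   so this identification is faithful). *)
Definition cat_vertex (t : seq nat) : Prop :=
  exists r, t = 2 :: r /\ path (fun x y => (2 <= y) && (y <= x.+1)) 2 r.
Definition cat_root : seq nat := [:: 2].
Definition cat_label (t : seq nat) : nat := last 2 t.
Definition cat_child (t u : seq nat) : Prop :=
  exists j, 2 <= j <= (last 2 t).+1 /\ u = rcons t j.

From mathcomp Require Import all_boot zify.
Set Implicit Arguments. Unset Strict Implicit. Unset Printing Implicit Defensive.

(* A link pattern is handled through its partner function, read in two ways.
   In line positions (point 0 moved behind 2m-1, as in the definition of the
   exposure number) we compute outermost links and ex (lpartner, outer).  As
   a matching it can be rewired: the links {i, q i} and {j, q j} are replaced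
   by {i, j} and {q i, q j} (rewire).  Both e_{2n-1} and the merge of a link
   with {2n-1, 0} are rewirings, and rewiring back along {q j, j} undoes a
   rewiring (rewireK).

   For pi in LP_{n-1}, pi^+ keeps the links of pi and adds {2n-1, 0} as a new
   rightmost outermost link (Section Plus).  Merging the outermost link that
   starts at u0 gives an element of P(pi) whose outermost links are those of
   pi left of u0 together with the merged one (Section Merge), so the i-th
   merge has exposure number i.  Conversely, if e_{2n-1}(sigma) = pi^+ then
   sigma = pi^+ or, by rewireK, sigma is the merge at the partner of 0
   (in_P_cases).

   For the tree, each sigma in LP_n has the unique parent obtained by
   dropping the link {2n-1, 0} of e_{2n-1}(sigma) (e_op_lp, unplus).  Sending
   a pattern to the labels on its path to the root, and a label path to the
   pattern reached by taking children, are mutually inverse isomorphisms of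
   labelled rooted trees. *)

Definition fpf_inv (D : pred nat) (q : nat -> nat) : Prop :=
  forall x, D x -> D (q x) /\ q x <> x /\ q (q x) = x.

Definition noncross (lo hi : nat) (q : nat -> nat) : Prop :=
  forall a b c d, lo <= a -> a < c -> c < b -> b < d -> d < hi ->
    q a = b -> q c = d -> False.

Definition rewire (q : nat -> nat) (i j x : nat) : nat :=
  if x == i then j else if x == j then i
  else if x == q i then q j else if x == q j then q i else q x.

Section Rewire.
Variables (D : pred nat) (q : nat -> nat) (i j : nat).
Hypotheses (Hq : fpf_inv D q) (Di : D i) (Dj : D j).
Hypotheses (ij : i <> j) (qij : q i <> j).

Local Notation r := (rewire q i j).

Lemma rewire_distinct :
  [/\ q i <> i, q j <> j, q j <> i & q i <> q j].
Proof.
have [_ [qii qqi]] := Hq Di; have [_ [qjj qqj]] := Hq Dj.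
split=> // E; first by apply: qij; rewrite -E qqj.
by apply: ij; rewrite -qqi E qqj.
Qed.

Lemma rewire_cases x :
  x = i /\ r x = j \/ x = j /\ r x = i \/ x = q i /\ r x = q j \/
  x = q j /\ r x = q i \/ ([/\ x <> i, x <> j, x <> q i & x <> q j] /\ r x = q x).
Proof.
have [qii qjj qji qiqj] := rewire_distinct.
rewrite /rewire; case: eqVneq => [->|xi]; first by left.
case: eqVneq => [->|xj]; first by right; left.
case: eqVneq => [->|xqi]; first by do 2 right; left.
case: eqVneq => [->|xqj]; first by do 3 right; left.
by do 4 right; split=> //; split; apply/eqP.
Qed.

Lemma rewire_special :
  [/\ r i = j, r j = i, r (q i) = q j & r (q j) = q i].
Proof.
have [qii qjj qji qiqj] := rewire_distinct.
by split; rewrite /rewire; repeat (case: eqP => ?); congruence.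
Qed.

Lemma rewire_fpf : fpf_inv D r.
Proof.
have [ri rj rqi rqj] := rewire_special.
have [Dqi [qii qqi]] := Hq Di; have [Dqj [qjj qqj]] := Hq Dj.
have [_ _ qji qiqj] := rewire_distinct.
move=> x Dx; case: (rewire_cases x) => [[-> ->]|[[-> ->]|[[-> ->]|[[-> ->]|]]]];
  try by repeat split; congruence.
move=> [[xi xj xqi xqj] ->]; have [Dqx [qxx qqx]] := Hq Dx.
split=> //; split=> //.
by rewrite /rewire; repeat (case: eqP => ?); congruence.
Qed.

Lemma rewireK x : rewire r (q j) j x = q x.
Proof.
have [ri rj rqi rqj] := rewire_special.
have [_ [_ qqi]] := Hq Di; have [_ [_ qqj]] := Hq Dj.
have [qii qjj qji qiqj] := rewire_distinct.
rewrite {1}/rewire rqj rj.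
case: (rewire_cases x) => [[-> _]|[[-> _]|[[-> _]|[[-> _]|[[xi xj xqi xqj] <-]]]]];
  repeat (case: eqP => ?); congruence.
Qed.

End Rewire.

Definition rewire_seq (s : seq nat) (i j : nat) : seq nat :=
  mkseq (rewire (nth 0 s) i j) (size s).

Lemma size_rewire_seq s i j : size (rewire_seq s i j) = size s.
Proof. exact: size_mkseq. Qed.

Lemma partner_rewire_seq s i j x :
  x < size s -> partner (rewire_seq s i j) x = rewire (nth 0 s) i j x.
Proof. exact: nth_mkseq. Qed.

Lemma rewire_seqK s i j :
  fpf_inv (fun x => x < size s) (nth 0 s) -> i < size s -> j < size s ->
  i <> j -> partner s i <> j ->
  rewire_seq (rewire_seq s i j) (partner s j) j = s.
Proof.
move=> Hs Di Dj ij qij; set t := rewire_seq s i j.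
have [Dqj _] := Hs j Dj.
have Et y : y < size s -> partner t y = rewire (nth 0 s) i j y.
  exact: partner_rewire_seq.
apply: (@eq_from_nth _ 0); first by rewrite !size_rewire_seq.
move=> x; rewrite !size_rewire_seq => Dx; rewrite partner_rewire_seq ?size_rewire_seq //.
rewrite -(rewireK Hs Di Dj ij qij x) /rewire !Et //.
Qed.

Lemma rewire_seq_fpf s i j :
  fpf_inv (fun x => x < size s) (nth 0 s) -> i < size s -> j < size s ->
  i <> j -> partner s i <> j ->
  fpf_inv (fun x => x < size (rewire_seq s i j)) (nth 0 (rewire_seq s i j)).
Proof.
move=> Hs Di Dj ij qij x; rewrite size_rewire_seq => Dx.
have [h1 [h2 h3]] := rewire_fpf Hs Di Dj ij qij Dx.
by rewrite !partner_rewire_seq.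
Qed.

Lemma lp_merge_rewire s a :
  partner s 0 = (size s).-1 -> lp_merge s a = rewire_seq s a 0.
Proof. by move=> E; rewrite /lp_merge /rewire_seq /rewire E. Qed.

Lemma e_op_last s : 0 < size s ->
  e_op (size s).-1 s =
  if partner s (size s).-1 == 0 then s else rewire_seq s (size s).-1 0.
Proof.
case: s => [//|x s] _; rewrite /e_op /= modn_small // modnn.
by case: ifP.
Qed.

Lemma is_lpP m s : is_lp m s <->
  [/\ size s = 2 * m, fpf_inv (fun x => x < size s) (nth 0 s)
    & noncross 0 (size s) (nth 0 s)].
Proof.
split=> [[Hs [Hi Hn]]|[Hs Hi Hn]]; rewrite Hs in Hi Hn *.
- by split=> // a b c d _; apply: Hn.
- by do !split=> //; move=> a b c d; apply: Hn.
Qed.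

Definition posM (M x : nat) : nat := if x == 0 then M else x.
Definition unposM (M u : nat) : nat := if u == M then 0 else u.

Lemma posK M x : x < M -> unposM M (posM M x) = x.
Proof. rewrite /posM /unposM; repeat case: eqP; lia. Qed.
Lemma unposK M u : 0 < u <= M -> posM M (unposM M u) = u.
Proof. rewrite /posM /unposM; repeat case: eqP; lia. Qed.
Lemma unpos_lt M u : 0 < u <= M -> unposM M u < M.
Proof. rewrite /unposM; case: eqP; lia. Qed.
Lemma pos_range M x : x < M -> 0 < posM M x <= M.
Proof. rewrite /posM; case: eqP; lia. Qed.
Lemma posM_id M x : 0 < x -> posM M x = x.
Proof. by rewrite /posM; case: eqP => //; lia. Qed.
Lemma unposM_id M u : u < M -> unposM M u = u.
Proof. by rewrite /unposM; case: eqP => //; lia. Qed.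

Definition lpartner (s : seq nat) (u : nat) : nat :=
  posM (size s) (partner s (unposM (size s) u)).

Lemma lpartner_pos s x :
  x < size s -> lpartner s (posM (size s) x) = posM (size s) (partner s x).
Proof. by move=> h; rewrite /lpartner posK. Qed.

Lemma lpartner_inner s u :
  0 < u < size s -> lpartner s u = posM (size s) (partner s u).
Proof. by move=> h; rewrite /lpartner unposM_id //; lia. Qed.

Lemma line_fpf s : fpf_inv (fun x => x < size s) (nth 0 s) ->
  fpf_inv (fun u => 0 < u <= size s) (lpartner s).
Proof.
move=> Hi u Hu; have xl := unpos_lt Hu; have [ql [qn qq]] := Hi _ xl.
split; first exact: pos_range.
split; last by rewrite /lpartner posK // qq unposK.
by move=> E; apply: qn; rewrite -(posK ql) -/(lpartner s u) E.
Qed.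

(* Being non-crossing does not depend on where the line is cut open, so it
   can equally be read in line positions. *)
Lemma is_lp_line m s : is_lp m s <->
  [/\ size s = 2 * m, fpf_inv (fun x => x < size s) (nth 0 s)
    & noncross 1 (size s).+1 (lpartner s)].
Proof.
rewrite is_lpP; set M := size s.
have Hin x y : 0 < x < M -> 0 < y < M -> lpartner s x = y -> partner s x = y.
  by move=> hx hy; rewrite lpartner_inner // /posM; case: eqP; lia.
split=> -[Hs Hi Hn]; split=> // a b c d a0 ac cb bd dM Ea Ec.
- have Pa := Hin a b ltac:(lia) ltac:(lia) Ea.
  have [dl|de] : d < M \/ d = M by lia.
  + by apply: (Hn a b c d) => //; apply: Hin; lia.
  + have [cl [_ cc]] := Hi c ltac:(lia).
    move: Ec; rewrite lpartner_inner; last lia.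
    rewrite de /posM; case: eqP => [Pc _|_]; last lia.
    by apply: (Hn 0 c a b) => //; try lia; rewrite -cc Pc.
- have [a0'|ap] : a = 0 \/ 0 < a by lia.
  + subst a; have [_ [_ bb]] := Hi 0 ltac:(lia); rewrite Ea in bb.
    apply: (Hn c d b M) => //; try lia.
    * by rewrite lpartner_inner ?Ec ?posM_id //; lia.
    * by rewrite lpartner_inner ?bb //; lia.
  + apply: (Hn a b c d) => //; try lia.
    * by rewrite lpartner_inner ?Ea ?posM_id //; lia.
    * by rewrite lpartner_inner ?Ec ?posM_id //; lia.
Qed.

Definition outer (q : nat -> nat) (M u : nat) : bool :=
  (u < q u) && ~~ has (fun v => (v < u) && (q u < q v)) (iota 1 M).

Lemma outerP q M u : outer q M u ->
  u < q u /\ forall v, 0 < v <= M -> v < u -> q v <= q u.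
Proof.
case/andP=> uq /hasPn H; split=> // v hv vu.
by have := H v; rewrite mem_iota vu /=; move/(_ ltac:(lia)); rewrite -leqNgt.
Qed.

Lemma outer_intro q M u : u < q u ->
  (forall v, 0 < v <= M -> v < u -> q v <= q u) -> outer q M u.
Proof.
move=> uq H; rewrite /outer uq; apply/hasPn => v; rewrite mem_iota => hv.
by apply/negP => /andP[vu]; rewrite ltnNge H //; lia.
Qed.

Lemma iota_last M : iota 1 M.+1 = iota 1 M ++ [:: M.+1].
Proof. by have := iotaD 1 M 1; rewrite addn1 add1n. Qed.

Lemma perm_pos_iota M : perm_eq (map (posM M) (iota 0 M)) (iota 1 M).
Proof.
case: M => // M.
have E : map (posM M.+1) (iota 1 M) = iota 1 M.
  rewrite -[RHS]map_id; apply/eq_in_map => x; rewrite mem_iota => h.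
  by apply: posM_id; lia.
by rewrite iota_last /= E cats1 perm_sym perm_rcons.
Qed.

Lemma outermost_line s x : x < size s ->
  outermost s x = outer (lpartner s) (size s) (posM (size s) x).
Proof.
move=> xl; rewrite /outermost xl /outer /=; change (pos s) with (posM (size s)).
rewrite lpartner_pos //; congr (_ && ~~ _).
rewrite -(eq_has_r (perm_mem (perm_pos_iota _))).
rewrite has_map; apply: eq_in_has => c; rewrite mem_iota => cl /=.
by rewrite lpartner_pos //; lia.
Qed.

Lemma ex_line s :
  ex s = count (outer (lpartner s) (size s)) (iota 1 (size s)).
Proof.
rewrite /ex (@eq_in_count _ _ (outer (lpartner s) (size s) \o posM (size s))).
  by rewrite -(count_map (posM (size s))); apply/permP/perm_pos_iota.
by move=> x; rewrite mem_iota => xl; apply: outermost_line; lia.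
Qed.

Lemma outer_lefts_line s : 0 < size s -> outer_lefts s =
  map (unposM (size s)) (filter (outer (lpartner s) (size s)) (iota 1 (size s))).
Proof.
move=> s0; rewrite /outer_lefts.
have -> : iota 1 (size s).-1 ++ [:: 0] = map (unposM (size s)) (iota 1 (size s)).
  case: (size s) s0 => // M _; rewrite iota_last map_cat /= {2}/unposM eqxx.
  congr (_ ++ _); rewrite -[LHS]map_id; apply/eq_in_map => x.
  by rewrite mem_iota => h; rewrite unposM_id //; lia.
rewrite filter_map; congr map; apply: eq_in_filter => u; rewrite mem_iota => hu /=.
by rewrite outermost_line ?unposK ?unpos_lt //; lia.
Qed.

Lemma iota_last2 N : iota 1 N.+2 = iota 1 N ++ [:: N.+1; N.+2].
Proof. by rewrite !iota_last -catA. Qed.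

Lemma iota_split a n : 0 < a <= n -> iota 1 n = iota 1 a.-1 ++ a :: iota a.+1 (n - a).
Proof.
move=> ha; rewrite {1}(_ : n = a.-1 + (n - a).+1); last lia.
by rewrite iotaD /= (_ : 1 + a.-1 = a) //; lia.
Qed.

Lemma half_2m m : (2 * m)./2 = m.
Proof. by rewrite mul2n doubleK. Qed.

Lemma size_lp m s : is_lp m s -> size s = 2 * m.
Proof. by case. Qed.

Section Plus.
Variable p : seq nat.
Local Notation N := (size p).
Local Notation sp := (lp_plus p).

Lemma size_plus : size sp = N.+2.
Proof. exact: size_mkseq. Qed.
Lemma plus_0 : partner sp 0 = N.+1.
Proof. by rewrite nth_mkseq. Qed.
Lemma plus_last : partner sp N.+1 = 0.
Proof. by rewrite nth_mkseq //= eqxx. Qed.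
Lemma plus_in u : 0 < u <= N -> partner sp u = lpartner p u.
Proof.
move=> hu; rewrite nth_mkseq; last lia.
have -> : (u == 0) = false by lia.
by have -> : (u == N.+1) = false by lia.
Qed.

Variable m : nat.
Hypothesis Hp : is_lp m p.

Lemma lp_line_fpf : fpf_inv (fun u => 0 < u <= N) (lpartner p).
Proof. by case/is_lpP: Hp => _ Hi _; apply: line_fpf. Qed.

Lemma plus_lp : is_lp m.+1 sp.
Proof.
have [_ Hi Hn] := (is_lp_line m p).1 Hp; have Hl := lp_line_fpf.
apply/is_lpP; rewrite size_plus; split; first by rewrite (size_lp Hp); lia.
- move=> x xl; have [->|x0] := eqVneq x 0; first by rewrite plus_0 plus_last.
  have [->|x1] := eqVneq x N.+1; first by rewrite plus_last plus_0.
  have hx : 0 < x <= N by lia.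
  have [l1 [l2 l3]] := Hl x hx.
  by rewrite !plus_in //; do !split=> //; lia.
- move=> a b c d _ ac cb bd dM Ea Ec.
  rewrite plus_in in Ec; last lia.
  have [d1 _] := Hl c ltac:(lia).
  have [a0|ap] : a = 0 \/ 0 < a by lia.
    by move: Ea; rewrite a0 plus_0; lia.
  rewrite plus_in in Ea; last lia.
  by apply: (Hn a b c d); lia.
Qed.

Lemma lpartner_plus_in u : 0 < u <= N -> lpartner sp u = lpartner p u.
Proof.
move=> hu; have [l1 _] := lp_line_fpf hu.
by rewrite lpartner_inner size_plus ?plus_in ?posM_id //; lia.
Qed.
Lemma lpartner_plus_top : lpartner sp N.+1 = N.+2.
Proof. by rewrite lpartner_inner size_plus ?plus_last //; lia. Qed.
Lemma lpartner_plus_last : lpartner sp N.+2 = N.+1.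
Proof. by rewrite /lpartner size_plus /unposM eqxx plus_0 posM_id. Qed.

Lemma outer_plus_in u : 0 < u <= N -> outer (lpartner sp) N.+2 u = outer (lpartner p) N u.
Proof.
move=> hu; rewrite /outer lpartner_plus_in //; congr (_ && ~~ _).
rewrite iota_last2 has_cat /= ![_ < u]ltnNge ![u <= _]ltnW ?orbF //=; try lia.
by apply: eq_in_has => v; rewrite mem_iota => hv; rewrite lpartner_plus_in //; lia.
Qed.

Lemma outer_plus_top : outer (lpartner sp) N.+2 N.+1.
Proof.
have [_ Hi _] := (is_lpP _ _).1 plus_lp.
have := line_fpf Hi; rewrite size_plus => Hl.
rewrite /outer lpartner_plus_top ltnSn; apply/hasPn => v; rewrite mem_iota => hv.
by have [] := Hl v; lia.
Qed.
Lemma outer_plus_last : outer (lpartner sp) N.+2 N.+2 = false.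
Proof. by rewrite /outer lpartner_plus_last ltnNge leqnSn. Qed.

Lemma ex_plus : ex sp = (ex p).+1.
Proof.
rewrite !ex_line size_plus iota_last2 count_cat.
rewrite (eq_in_count (a2 := outer (lpartner p) N)); last first.
  by move=> u; rewrite mem_iota => hu; apply: outer_plus_in; lia.
by rewrite /= outer_plus_top outer_plus_last addn1.
Qed.

Lemma outer_lefts_plus :
  outer_lefts sp = filter (outer (lpartner p) N) (iota 1 N) ++ [:: N.+1].
Proof.
rewrite outer_lefts_line ?size_plus // iota_last2 filter_cat.
rewrite (eq_in_filter (a2 := outer (lpartner p) N)); last first.
  by move=> u; rewrite mem_iota => hu; apply: outer_plus_in; lia.
rewrite /= outer_plus_top outer_plus_last map_cat /= unposM_id //.
congr (_ ++ _); rewrite -[RHS]map_id; apply/eq_in_map => x.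
by rewrite mem_filter mem_iota => /andP[_ h]; rewrite unposM_id //; lia.
Qed.

Lemma plus_inP : in_P p sp.
Proof.
split; first by rewrite (size_lp Hp) half_2m; apply: plus_lp.
by rewrite e_op_last size_plus // [N.+2.-1]/= plus_last eqxx.
Qed.

End Plus.

Section Merge.
Variables (p : seq nat) (m : nat).
Hypothesis Hp : is_lp m p.
Local Notation N := (size p).
Local Notation sp := (lp_plus p).
Variable u0 : nat.
Hypotheses (hu0 : 0 < u0 <= N) (ou0 : outer (lpartner p) N u0).
Local Notation w := (lpartner p u0).
Local Notation sm := (lp_merge sp u0).

Lemma sp_fpf : fpf_inv (fun x => x < size sp) (nth 0 sp).
Proof. by have [] := (is_lpP _ _).1 (plus_lp Hp). Qed.

Lemma w_facts : u0 < w <= N /\ lpartner p w = u0.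
Proof.
have [l1 [_ l3]] := lp_line_fpf Hp hu0; have [uw _] := outerP ou0; lia.
Qed.

Lemma merge_as_rewire : sm = rewire_seq sp u0 0.
Proof. by rewrite lp_merge_rewire // plus_0 size_plus. Qed.

Lemma merge_rewire_hyps :
  [/\ u0 < size sp, 0 < size sp, u0 <> 0 & partner sp u0 <> 0].
Proof. have [? _] := w_facts; rewrite size_plus plus_in //; split; lia. Qed.

Lemma partner_merge x : x < N.+2 ->
  partner sm x = rewire (nth 0 sp) u0 0 x.
Proof. by move=> xl; rewrite merge_as_rewire partner_rewire_seq ?size_plus. Qed.

Lemma merge_special :
  [/\ partner sm u0 = 0, partner sm 0 = u0, partner sm w = N.+1
    & partner sm N.+1 = w].
Proof.
have [Di Dj ij qij] := merge_rewire_hyps; have [uw _] := w_facts.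
have [ri rj rqi rqj] := rewire_special sp_fpf Di Dj ij qij.
rewrite plus_in // plus_0 in rqi rqj.
by rewrite !partner_merge //; lia.
Qed.

Lemma merge_lp : is_lp m.+1 sm.
Proof.
have [Di Dj ij qij] := merge_rewire_hyps; have [uw wu] := w_facts.
have [_ _ Hn] := (is_lp_line m p).1 Hp.
have [_ oo] := outerP ou0; have Hl := lp_line_fpf Hp.
apply/is_lpP; rewrite merge_as_rewire; split.
- by rewrite size_rewire_seq size_plus (size_lp Hp); lia.
- exact: rewire_seq_fpf sp_fpf Di Dj ij qij.
rewrite size_rewire_seq.
move=> a b c d _ ac cb bd dM Ea Ec; rewrite size_plus in dM.
rewrite !partner_rewire_seq ?size_plus in Ea Ec; try lia.
have Cases := rewire_cases sp_fpf Di Dj ij qij.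
rewrite plus_in // plus_0 in Cases.
case: (Cases a) => [[? ?]|[[? ?]|[[? ?]|[[? ?]|[[a1 a2 a3 a4] Ra]]]]]; try subst a; try lia;
case: (Cases c) => [[? ?]|[[? ?]|[[? ?]|[[? ?]|[[c1 c2 c3 c4] Rc]]]]]; try subst c; try lia.
- (* an old link crossing the new link {0, u0} would leave {u0, w} *)
  rewrite plus_in in Rc; last lia.
  have dw : d <= w by rewrite -Ec Rc; apply: oo; lia.
  have [_ [_ cc]] := Hl c ltac:(lia).
  have dnw : d <> w by move=> E; apply: c1; rewrite -cc -Rc Ec E wu.
  by apply: (Hn c d u0 w); lia.
- (* an old link crossing {w, N+1} would cross or enclose {u0, w} *)
  rewrite plus_in in Ra; last lia.
  have [al|ag] : a < u0 \/ u0 < a by lia.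
  + by have := oo a ltac:(lia) al; lia.
  + by apply: (Hn u0 w a b); lia.
- rewrite plus_in in Ra; last lia.
  rewrite plus_in in Rc; last lia.
  have [dN _] := Hl c ltac:(lia).
  by apply: (Hn a b c d); lia.
Qed.

Lemma e_op_merge : e_op (size sm).-1 sm = sp.
Proof.
have [Di Dj ij qij] := merge_rewire_hyps; have [uw _] := w_facts.
have [_ _ _ top] := merge_special.
have sz : size sm = N.+2 by rewrite merge_as_rewire size_rewire_seq size_plus.
rewrite e_op_last sz // [N.+2.-1]/= top ifN_eq; last by apply/eqP; lia.
by rewrite merge_as_rewire -plus_0 (rewire_seqK sp_fpf Di Dj ij qij).
Qed.

Lemma merge_inP : in_P p sm.
Proof.
split; last exact: e_op_merge.
by rewrite (size_lp Hp) half_2m; apply: merge_lp.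
Qed.

Lemma size_merge : size sm = N.+2.
Proof. by rewrite merge_as_rewire size_rewire_seq size_plus. Qed.

Lemma lpartner_merge_u0 : lpartner sm u0 = N.+2.
Proof.
have [m1 _ _ _] := merge_special.
by rewrite lpartner_inner size_merge ?m1 //; lia.
Qed.

Lemma lpartner_merge_other u : 0 < u <= N -> u <> u0 -> u <> w ->
  lpartner sm u = lpartner p u.
Proof.
move=> hu uu uw; have [Di Dj ij qij] := merge_rewire_hyps.
have [l1 _] := lp_line_fpf Hp hu.
rewrite lpartner_inner size_merge; last lia.
rewrite partner_merge; last lia.
have Cases := rewire_cases sp_fpf Di Dj ij qij u.
rewrite plus_in // plus_0 in Cases.
case: Cases => [[? _]|[[? _]|[[? _]|[[? _]|[_ ->]]]]]; try lia.
by rewrite plus_in ?posM_id //; lia.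
Qed.

Lemma merge_line_fpf : fpf_inv (fun u => 0 < u <= N.+2) (lpartner sm).
Proof.
have [_ Hi _] := (is_lpP _ _).1 merge_lp.
by have := line_fpf Hi; rewrite size_merge.
Qed.

Lemma outer_merge_lt u : 0 < u < u0 ->
  outer (lpartner sm) N.+2 u = outer (lpartner p) N u.
Proof.
have [uw _] := w_facts.
move=> hu; rewrite /outer lpartner_merge_other //; try lia.
congr (_ && ~~ _); apply/hasP/hasP => -[v hv /andP[h4 h5]]; exists v;
  move: hv; rewrite !mem_iota => hv; try lia;
  have E : lpartner sm v = lpartner p v by apply: lpartner_merge_other; lia.
- by rewrite h4 -E.
- by rewrite h4 E.
Qed.

Lemma outer_merge_u0 : outer (lpartner sm) N.+2 u0.
Proof.
have Hl := merge_line_fpf.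
rewrite /outer lpartner_merge_u0 //; apply/andP; split; first lia.
by apply/hasPn => v; rewrite mem_iota => hv; have [] := Hl v; lia.
Qed.

Lemma outer_merge_gt u : u0 < u <= N.+2 -> outer (lpartner sm) N.+2 u = false.
Proof.
have Hl := merge_line_fpf.
move=> hu; have [k1 [k2 k3]] := Hl u ltac:(lia).
have [_ [_ e]] := Hl u0 ltac:(lia); rewrite lpartner_merge_u0 in e.
have uN : lpartner sm u != N.+2 by apply/eqP => E; move: k3; rewrite E e; lia.
apply/negbTE; rewrite negb_and negbK; apply/orP; right.
apply/hasP; exists u0; first by rewrite mem_iota; lia.
by rewrite lpartner_merge_u0; apply/andP; split; lia.
Qed.

Lemma ex_merge : ex sm = (count (outer (lpartner p) N) (iota 1 u0.-1)).+1.
Proof.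
rewrite ex_line size_merge (@iota_split u0); last lia.
rewrite count_cat /= outer_merge_u0.
rewrite (eq_in_count (a2 := outer (lpartner p) N)); last first.
  by move=> u; rewrite mem_iota => hu; apply: outer_merge_lt; lia.
rewrite (eq_in_count (a1 := outer (lpartner sm) N.+2) (s := iota u0.+1 _) (a2 := pred0)).
  by rewrite count_pred0 addn0 addn1.
by move=> u; rewrite mem_iota => hu; apply: outer_merge_gt; lia.
Qed.

End Merge.

Section Characterization.
Variables (p : seq nat) (m : nat).
Hypothesis Hp : is_lp m p.
Local Notation N := (size p).
Local Notation sp := (lp_plus p).
Local Notation L := (filter (outer (lpartner p) N) (iota 1 N)).

Lemma in_P_cases s : in_P p s -> s = sp \/ exists2 u0, u0 \in L & s = lp_merge sp u0.
Proof.
case=> Hl He; rewrite (size_lp Hp) half_2m in Hl.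
have [Hs Hi Hn] := (is_lpP _ _).1 Hl.
have Ez : size s = N.+2 by rewrite Hs (size_lp Hp); lia.
move: He; rewrite e_op_last Ez // [N.+2.-1]/=; case: ifP => [_ -> | /eqP Ene He]; first by left.
set a := partner s N.+1 in Ene He; set b := partner s 0.
have [a1 [a2 a3]] := Hi N.+1 ltac:(lia); have [b1 [b2 b3]] := Hi 0 ltac:(lia).
rewrite -/a -/b Ez in a1 a2 a3 b1 b2 b3.
have Di : N.+1 < size s by rewrite Ez.
have Dj : 0 < size s by rewrite Ez.
(* sigma is pi^+ rewired back at b, i.e. the merge at b *)
have Hs_sp := rewire_seqK Hi Di Dj ltac:(lia) Ene.
rewrite He -/b in Hs_sp.
have [_ _ _ rb] := rewire_special Hi Di Dj ltac:(lia) Ene.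
have bN1 : b <> N.+1 by move=> E; apply: Ene; rewrite /a -E b3.
have ba : b < a.
  have anb : a <> b by move=> E; move: a3; rewrite E b3.
  have [//|ab] : b < a \/ a < b by lia.
  by exfalso; apply: (Hn 0 b a N.+1) => //; lia.
have Pb : lpartner p b = a.
  by rewrite -plus_in; [rewrite -He partner_rewire_seq //; lia | lia].
right; exists b; last by rewrite lp_merge_rewire ?plus_0 ?size_plus // Hs_sp.
rewrite mem_filter mem_iota; apply/andP; split; last lia.
(* b is outermost in pi: a link of pi around {b, a} would cross {0, b} *)
apply: outer_intro; rewrite Pb // => v hv vb; rewrite leqNgt; apply/negP => av.
have [k1 _] := lp_line_fpf Hp hv.
have Cases := rewire_cases Hi Di Dj ltac:(lia) Ene v; rewrite -/a -/b in Cases.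
case: Cases => [[? _]|[[? _]|[[? _]|[[? _]|[_ Ev]]]]]; try lia.
have Pv : partner s v = lpartner p v.
  by rewrite -Ev -partner_rewire_seq ?Ez ?He ?plus_in //; lia.
by apply: (Hn 0 b v (partner s v)) => //; rewrite ?Ez; lia.
Qed.

End Characterization.

Lemma count_nth_filter (P : pred nat) n j : j < size (filter P (iota 1 n)) ->
  count P (iota 1 (nth 0 (filter P (iota 1 n)) j).-1) = j.
Proof.
move=> jl; set u := nth 0 _ j.
have : u \in filter P (iota 1 n) by apply: mem_nth.
rewrite mem_filter mem_iota => /andP[Pu hu].
have EL : filter P (iota 1 n) =
    filter P (iota 1 u.-1) ++ u :: filter P (iota u.+1 (n - u)).
  by rewrite {1}(@iota_split u) ?filter_cat /= ?Pu //; lia.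
have Un : uniq (filter P (iota 1 n)) by apply/filter_uniq/iota_uniq.
have E2 : nth 0 (filter P (iota 1 n)) (size (filter P (iota 1 u.-1))) = u.
  by rewrite EL nth_cat ltnn subnn.
have hs : size (filter P (iota 1 u.-1)) < size (filter P (iota 1 n)).
  by rewrite EL size_cat /=; lia.
have := nth_uniq 0 jl hs Un; rewrite E2 eqxx => /esym/eqP ->.
by rewrite size_filter.
Qed.

Definition merge_at (p : seq nat) (i : nat) : seq nat :=
  lp_merge (lp_plus p) (nth 0 (outer_lefts (lp_plus p)) i.-1).

Section Children.
Variables (p : seq nat) (m : nat).
Hypothesis Hp : is_lp m p.
Local Notation N := (size p).
Local Notation sp := (lp_plus p).
Local Notation L := (filter (outer (lpartner p) N) (iota 1 N)).

Lemma ex_size : ex p = size L.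
Proof. by rewrite ex_line size_filter. Qed.

Lemma nth_outer_lefts_plus i : 1 <= i <= ex p ->
  nth 0 (outer_lefts sp) i.-1 = nth 0 L i.-1.
Proof.
rewrite ex_size => hi; rewrite (outer_lefts_plus Hp) nth_cat.
by rewrite ifT //; lia.
Qed.

Lemma merge_at_spec i : 1 <= i <= ex p ->
  in_P p (merge_at p i) /\ ex (merge_at p i) = i.
Proof.
move=> hi; rewrite /merge_at nth_outer_lefts_plus //.
have hi' : i.-1 < size L by rewrite -ex_size; lia.
have : nth 0 L i.-1 \in L by apply: mem_nth.
rewrite mem_filter mem_iota => /andP[ou hu].
have hu' : 0 < nth 0 L i.-1 <= N by lia.
split; first exact: (merge_inP Hp hu' ou).
by rewrite (ex_merge Hp hu' ou) count_nth_filter //; lia.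
Qed.

Lemma in_P_merge_at s : in_P p s ->
  s = sp \/ exists2 i, 1 <= i <= ex p & s = merge_at p i.
Proof.
case/(in_P_cases Hp) => [->|[u0 uL ->]]; [by left | right].
exists (index u0 L).+1; first by rewrite ex_size /= index_mem.
rewrite /merge_at nth_outer_lefts_plus /= ?nth_index //.
by rewrite ex_size /= index_mem.
Qed.

End Children.

Lemma children_exposures (m k : nat) (p : seq nat) :
  is_lp m p -> ex p = k ->
  (exists ss : seq (seq nat),
      uniq ss /\ (forall sigma, in_P p sigma <-> sigma \in ss) /\
      perm_eq (map ex ss) (iota 1 k.+1)) /\
  (in_P p (lp_plus p) /\ ex (lp_plus p) = k.+1) /\
  (forall i, 1 <= i <= k ->
     let s := lp_merge (lp_plus p) (nth 0 (outer_lefts (lp_plus p)) i.-1) in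
     in_P p s /\ ex s = i).
Proof.
move=> Hp <-.
have HP := plus_inP Hp; have EP := ex_plus Hp.
have HM := merge_at_spec Hp.
split; last by split.
set ss := lp_plus p :: map (merge_at p) (iota 1 (ex p)).
have Hmap : map ex ss = (ex p).+1 :: iota 1 (ex p).
  rewrite /= EP -map_comp; congr (_ :: _); rewrite -[RHS]map_id.
  by apply/eq_in_map => i; rewrite mem_iota => hi /=; have [_ ->] := HM i ltac:(lia).
have Hperm : perm_eq (map ex ss) (iota 1 (ex p).+1).
  by rewrite Hmap iota_last perm_sym cats1 perm_rcons.
exists ss; split; first by apply: (@map_uniq _ _ ex); rewrite (perm_uniq Hperm) iota_uniq.
split=> // s; split.
- case/(in_P_merge_at Hp) => [->|[i hi ->]]; first exact: mem_head.
  by rewrite inE map_f ?orbT // mem_iota; lia.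
- rewrite inE => /orP[/eqP ->|/mapP[i]] //.
  by rewrite mem_iota => hi ->; have [] := HM i ltac:(lia).
Qed.

Lemma e_op_lp m w : is_lp m.+1 w ->
  is_lp m.+1 (e_op (size w).-1 w) /\ partner (e_op (size w).-1 w) 0 = (2 * m).+1.
Proof.
move=> Hw; have [Hs Hi Hn] := (is_lpP _ _).1 Hw.
have Ez : size w = (2 * m).+2 by rewrite Hs; lia.
rewrite e_op_last Ez // [_.+2.-1]/=; case: ifP => [/eqP E1 | /eqP Ene].
  by have [_ [_ H]] := Hi (2 * m).+1 ltac:(lia); rewrite E1 in H.
set top := (2 * m).+1 in Ez Ene *.
have Di : top < size w by rewrite Ez.
have Dj : 0 < size w by rewrite Ez.
have [_ rj _ _] := rewire_special Hi Di Dj ltac:(lia) Ene.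
split; last by rewrite partner_rewire_seq.
apply/is_lpP; split; first by rewrite size_rewire_seq.
  exact: rewire_seq_fpf.
set a := partner w top in Ene *; set b := partner w 0.
have [a1 [a2 a3]] := Hi top Di; have [b1 [b2 b3]] := Hi 0 Dj.
rewrite -/a -/b Ez in a1 a2 a3 b1 b2 b3.
have anb : a <> b by move=> E; move: a3; rewrite E b3.
have bt : b <> top by move=> E; apply: Ene; rewrite /a -E b3.
have ba : b < a.
  have [//|ab] : b < a \/ a < b by lia.
  by exfalso; apply: (Hn 0 b a top) => //; rewrite ?Ez; lia.
move=> x y z t _ xz zy yt; rewrite size_rewire_seq Ez => tM.
rewrite !partner_rewire_seq ?Ez; try lia.
have Cases := rewire_cases Hi Di Dj ltac:(lia) Ene; rewrite -/a -/b in Cases.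
move=> Exy Ezt.
case: (Cases x) => [[? ?]|[[? ?]|[[? ?]|[[? ?]|[[x1 x2 x3 x4] Rx]]]]]; try subst x; try lia;
case: (Cases z) => [[? ?]|[[? ?]|[[? ?]|[[? ?]|[[z1 z2 z3 z4] Rz]]]]]; try subst z; try lia.
- (* a link leaving the new link {b, a} would cross {a, top} *)
  have [_ [_ zz]] := Hi z ltac:(rewrite Ez; lia).
  have tt : t <> top by move=> E; apply: z3; rewrite -zz -Rz Ezt E.
  by apply: (Hn z t a top) => //; rewrite ?Ez; lia.
- (* a link entering {b, a} from the left would cross {0, b} *)
  by apply: (Hn 0 b x y) => //; rewrite ?Ez; lia.
- by apply: (Hn x y z t) => //; rewrite ?Ez; lia.
Qed.

(* The inverse of pi |-> pi^+: forget the link {2n-1, 0} and read the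
   remaining positions 1..2n-2 back as the points of a pattern. *)
Definition unplus (s : seq nat) : seq nat :=
  mkseq (fun y => unposM (size s).-2 (partner s (posM (size s).-2 y))) (size s).-2.

Lemma unplus_plus m p : is_lp m p -> unplus (lp_plus p) = p.
Proof.
move=> Hp; have [_ Hi _] := (is_lpP _ _).1 Hp.
apply: (@eq_from_nth _ 0); first by rewrite size_mkseq size_plus.
move=> y; rewrite size_mkseq size_plus => yl.
rewrite nth_mkseq size_plus // [_.+2.-2]/= plus_in ?pos_range // lpartner_pos //.
by rewrite posK //; have [] := Hi y yl.
Qed.

Section Unplus.
Variables (m : nat) (s : seq nat).
Hypotheses (Hs : is_lp m.+1 s) (top0 : partner s 0 = (2 * m).+1).
Local Notation N := (2 * m).
Local Notation v := (unplus s).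

Lemma unplus_size : size s = N.+2 /\ size v = N.
Proof.
have Ez : size s = N.+2 by rewrite (size_lp Hs); lia.
by rewrite size_mkseq Ez.
Qed.

Lemma unplus_range u : 0 < u <= N -> 0 < partner s u <= N.
Proof.
have [Ez _] := unplus_size; have [_ Hi _] := (is_lpP _ _).1 Hs; rewrite Ez in Hi.
have [_ [_ top']] := Hi 0 ltac:(lia); rewrite top0 in top'.
move=> hu; have [k1 [k2 k3]] := Hi u ltac:(lia).
have h1 : partner s u <> 0 by move=> E; move: k3; rewrite E top0; lia.
have h2 : partner s u <> N.+1 by move=> E; move: k3; rewrite E top'; lia.
lia.
Qed.

Lemma lpartner_unplus u : 0 < u <= N -> lpartner v u = partner s u.
Proof.
have [Ez Sv] := unplus_size.
move=> hu; rewrite /lpartner Sv nth_mkseq; last by rewrite Ez; apply: unpos_lt.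
by rewrite Ez unposK // unposK //; apply: unplus_range.
Qed.

Lemma unplus_lp : is_lp m v.
Proof.
have [Ez Sv] := unplus_size; have [_ Hi Hn] := (is_lpP _ _).1 Hs.
apply/is_lp_line; rewrite Sv; split=> //.
- have Pv y : y < N -> partner v y = unposM N (partner s (posM N y)).
    by move=> yl; rewrite nth_mkseq Ez.
  move=> y yl; have hu := pos_range yl.
  have uD : posM N y < size s by rewrite Ez; lia.
  have [_ [su ss]] := Hi _ uD; have hu' := unplus_range hu.
  rewrite Pv //; set u' := partner s (posM N y) in su ss hu' *.
  rewrite Pv ?unpos_lt // unposK // ss posK //.
  split=> //; split=> // E; apply: su.
  by rewrite -(unposK hu') E.
- move=> a b c d a1 ac cb bd dN; rewrite !lpartner_unplus; try lia.
  by move=> Ea Ec; apply: (Hn a b c d) => //; rewrite Ez; lia.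
Qed.

Lemma plus_unplus : s = lp_plus v.
Proof.
have [Ez Sv] := unplus_size; have [_ Hi _] := (is_lpP _ _).1 Hs.
have [_ [_ top']] := Hi 0 ltac:(rewrite Ez; lia); rewrite top0 in top'.
apply: (@eq_from_nth _ 0); first by rewrite size_plus Sv Ez.
move=> x; rewrite Ez => xl.
have [->|x0] := eqVneq x 0; first by rewrite plus_0 Sv top0.
have [->|x1] := eqVneq x N.+1; first by rewrite -Sv plus_last Sv top'.
by rewrite plus_in ?Sv ?lpartner_unplus //; lia.
Qed.

End Unplus.

Definition parent (w : seq nat) : seq nat := unplus (e_op (size w).-1 w).

Lemma parent_spec m w : is_lp m.+1 w -> is_lp m (parent w) /\ in_P (parent w) w.
Proof.
move=> Hw; have [He E0] := e_op_lp Hw; have Hv := unplus_lp He E0.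
split=> //; split; last by rewrite /parent -(plus_unplus He E0).
by rewrite (size_lp Hv) half_2m.
Qed.

Lemma parent_unique m v w : is_lp m v -> in_P v w -> parent w = v.
Proof. by move=> Hv [_ He]; rewrite /parent He (unplus_plus Hv). Qed.

Lemma in_P_lp m v w : is_lp m v -> in_P v w -> is_lp m.+1 w.
Proof. by move=> Hv [H _]; rewrite (size_lp Hv) half_2m in H. Qed.

Definition child (v : seq nat) (i : nat) : seq nat :=
  if i == (ex v).+1 then lp_plus v else merge_at v i.

Lemma child_spec m v i : is_lp m v -> 1 <= i <= (ex v).+1 ->
  in_P v (child v i) /\ ex (child v i) = i.
Proof.
move=> Hv hi; rewrite /child; case: eqP => [->|ne].
  by split; [exact: plus_inP Hv | exact: ex_plus Hv].
by apply: (merge_at_spec Hv); lia.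
Qed.

Lemma child_ex m v w : is_lp m v -> in_P v w ->
  child v (ex w) = w /\ 1 <= ex w <= (ex v).+1.
Proof.
move=> Hv Hw; case: (in_P_merge_at Hv Hw) => [->|[i hi ->]].
  by rewrite /child (ex_plus Hv) eqxx; split=> //; lia.
have [_ ->] := merge_at_spec Hv hi.
by rewrite /child ifN_eq; [split=> //; lia | apply/eqP; lia].
Qed.

Lemma lp1_root v : is_lp 1 v -> v = lp_root.
Proof.
case=> Hs [Hi _]; case: v Hs Hi => [|x [|y []]] //= _ Hi.
have [h1 [h2 _]] := Hi 0 erefl; have [k1 [k2 _]] := Hi 1 erefl; simpl in *.
by rewrite /lp_root; congr [:: _; _]; lia.
Qed.

Lemma lp_root_lp : is_lp 1 lp_root.
Proof. by split=> //; split=> [[|[|i]] //|a b c d]; lia. Qed.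

Fixpoint label_path (m : nat) (v : seq nat) : seq nat :=
  if m is m'.+1 then rcons (label_path m' (parent v)) (ex v).+1 else [::].
Definition to_cat (v : seq nat) : seq nat := label_path (size v)./2 v.
Definition of_cat (t : seq nat) : seq nat :=
  foldl (fun v j => child v j.-1) lp_root (behead t).

Lemma to_cat_lp m v : is_lp m v -> to_cat v = label_path m v.
Proof. by move=> Hv; rewrite /to_cat (size_lp Hv) half_2m. Qed.

Lemma label_path_S m v :
  label_path m.+1 v = rcons (label_path m (parent v)) (ex v).+1.
Proof. by []. Qed.

Lemma of_cat_rcons r j : of_cat (2 :: rcons r j) = child (of_cat (2 :: r)) j.-1.
Proof. by rewrite /of_cat /= foldl_rcons. Qed.

Lemma label_path_spec m v : 0 < m -> is_lp m v ->
  [/\ cat_vertex (label_path m v), of_cat (label_path m v) = v,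
      last 2 (label_path m v) = (ex v).+1 & size (label_path m v) = m].
Proof.
elim: m v => [//|m IH] v _ Hv.
case: m IH Hv => [_ Hv | m IH Hv].
  by rewrite (lp1_root Hv); split=> //; exists [::].
have [Hpv Hin] := parent_spec Hv.
have [[r [Er Pr]] g l sz] := IH _ (ltn0Sn _) Hpv.
have [Ec hi] := child_ex Hpv Hin.
rewrite label_path_S Er; split.
- exists (rcons r (ex v).+1); split=> //.
  rewrite rcons_path Pr /=; move: l; rewrite Er /= => ->; apply/andP; split; lia.
- by rewrite of_cat_rcons -Er g.
- by rewrite last_rcons.
- by rewrite size_rcons -Er sz.
Qed.

Lemma of_cat_spec r : cat_vertex (2 :: r) ->
  is_lp (size r).+1 (of_cat (2 :: r)) /\ label_path (size r).+1 (of_cat (2 :: r)) = 2 :: r.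
Proof.
elim/last_ind: r => [|r j IH]; first by split; [exact: lp_root_lp | ].
case=> r0 [[<-]]; rewrite rcons_path => /andP[P Rj].
have [Hv Ef] := IH (ex_intro _ r (conj erefl P)).
set v := of_cat (2 :: r) in Hv Ef *.
have [_ _ l _] := label_path_spec (ltn0Sn _) Hv.
move: l; rewrite Ef /= => l; rewrite l in Rj.
have hj : 1 <= j.-1 <= (ex v).+1 by lia.
have [Hin Ex] := child_spec Hv hj.
rewrite of_cat_rcons -/v size_rcons; split; first exact: (in_P_lp Hv Hin).
by rewrite (parent_unique Hv Hin) Ef Ex; congr rcons; lia.
Qed.

Lemma lp_tree_is_catalan : exists f g : seq nat -> seq nat,
  (forall v, lp_vertex v -> cat_vertex (f v) /\ g (f v) = v) /\
  (forall t, cat_vertex t -> lp_vertex (g t) /\ f (g t) = t) /\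
  f lp_root = cat_root /\
  (forall v, lp_vertex v -> cat_label (f v) = lp_label v) /\
  (forall v w, lp_vertex v -> lp_vertex w -> (in_P v w <-> cat_child (f v) (f w))).
Proof.
exists to_cat, of_cat; split; [|split; [|split; [|split]]].
- by move=> v [m [m1 Hv]]; rewrite (to_cat_lp Hv); have [] := label_path_spec m1 Hv.
- move=> t [r [-> P]]; have [Hv Ef] := of_cat_spec (ex_intro _ r (conj erefl P)).
  by split; [exists (size r).+1 | rewrite (to_cat_lp Hv)].
- by [].
- by move=> v [m [m1 Hv]]; rewrite (to_cat_lp Hv); have [] := label_path_spec m1 Hv.
move=> v w [m [m1 Hv]] [m' [m1' Hw]]; rewrite (to_cat_lp Hv) (to_cat_lp Hw).
have [_ gv lv sv] := label_path_spec m1 Hv.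
split.
- move=> Hin; have Em : m' = m.+1.
    by have := size_lp (in_P_lp Hv Hin); rewrite (size_lp Hw); lia.
  subst m'; have [Ec hi] := child_ex Hv Hin.
  exists (ex w).+1; split; first by rewrite lv; lia.
  by rewrite label_path_S (parent_unique Hv Hin).
- move=> [j [hj E]]; have [_ _ _ sw] := label_path_spec m1' Hw.
  have Em : m' = m.+1 by move: sw; rewrite E size_rcons sv.
  subst m'; have [Hpw Hin] := parent_spec Hw.
  move: E; rewrite label_path_S => /rcons_inj [E _].
  have [_ gp _ _] := label_path_spec m1 Hpw.
  by rewrite -(_ : parent w = v) // -gp E gv.
Qed.

Theorem mainTheorem3 :
  (forall (n k : nat) (p : seq nat),
      2 <= n -> is_lp n.-1 p -> ex p = k ->
      (exists ss : seq (seq nat),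
          uniq ss /\ (forall sigma, in_P p sigma <-> sigma \in ss) /\
          perm_eq (map ex ss) (iota 1 k.+1)) /\
      (in_P p (lp_plus p) /\ ex (lp_plus p) = k.+1) /\
      (forall i, 1 <= i <= k ->
         let s := lp_merge (lp_plus p) (nth 0 (outer_lefts (lp_plus p)) i.-1) in
         in_P p s /\ ex s = i)) /\
  (exists f g : seq nat -> seq nat,
      (forall v, lp_vertex v -> cat_vertex (f v) /\ g (f v) = v) /\
      (forall t, cat_vertex t -> lp_vertex (g t) /\ f (g t) = t) /\
      f lp_root = cat_root /\
      (forall v, lp_vertex v -> cat_label (f v) = lp_label v) /\
      (forall v w, lp_vertex v -> lp_vertex w ->
         (in_P v w <-> cat_child (f v) (f w)))).
Proof.
split; last exact: lp_tree_is_catalan.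
by move=> n k p _; apply: children_exposures.
Qed.
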